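(* Let $\Gamma$ be a Coxeter graph with Coxeter matrix $M=(m_{s,t})_{s,t\in S}$. Let $u,v\in W[\Gamma]$ and $s,t\in S$. If $u(\alpha_s)=v(\alpha_t)$ in $V$, then $u\cdot\sigma_s=v\cdot\sigma_t$ in $KVA[\Gamma]$ and $u\cdot(\tau_s\sigma_s)=v\cdot(\tau_t\sigma_t)$ in $PVA[\Gamma]$.
   Context: A Coxeter matrix on a countable set $S$ is a symmetric matrix $M=(m_{s,t})_{s,t\in S}$ with entries in $\mathbb{N}\cup\{\infty\}$ such that $m_{s,s}=1$ for all $s$ and $m_{s,t}=m_{t,s}\ge 2$ for $s\neq t$; it is encoded by a Coxeter graph $\Gamma$ with vertex set $S$ ($\Gamma$ is called finite if $S$ is finite). For letters $a,b$ and an integer $m\ge 2$, $\Pi_L(a,b,m)$ denotes the alternating word $aba\cdots$ of length $m$ beginning with $a$, and $\Pi_R(b,a,m)$ denotes the alternating word $\cdots aba$ of length $m$ ending with $a$; the same notation denotes the elements these words represent in a group. The Artin group $A[\Gamma]$ is given by the presentation $\langle S\mid \Pi_R(t,s,m_{s,t})=\Pi_R(s,t,m_{s,t})\text{ for } s\neq t,\ m_{s,t}\neq\infty\rangle$, and the Coxeter group $W[\Gamma]$ is the quotient of $A[\Gamma]$ by the relations $s^2=1$, $s\in S$. The virtual Artin group $VA[\Gamma]$ is the group generated by two sets $\{\sigma_s\mid s\in S\}$ and $\{\tau_s\mid s\in S\}$ in bijection with $S$, subject to the following relations, for all $s,t\in S$ with $s\neq t$ and $m_{s,t}\neq\infty$: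 (v1) $\Pi_R(\sigma_t,\sigma_s,m_{s,t})=\Pi_R(\sigma_s,\sigma_t,m_{s,t})$; (v2) $\Pi_R(\tau_t,\tau_s,m_{s,t})=\Pi_R(\tau_s,\tau_t,m_{s,t})$, together with $\tau_s^2=1$ for all $s\in S$; (v3) $\Pi_R(\tau_s,\tau_t,m_{s,t}-1)\,\sigma_s=\sigma_r\,\Pi_R(\tau_s,\tau_t,m_{s,t}-1)$, where $r=s$ if $m_{s,t}$ is even and $r=t$ if $m_{s,t}$ is odd. We have homomorphisms $\iota_A:A[\Gamma]\to VA[\Gamma]$, $s\mapsto\sigma_s$; $\iota_W:W[\Gamma]\to VA[\Gamma]$, $s\mapsto\tau_s$; $\pi_K:VA[\Gamma]\to W[\Gamma]$, $\sigma_s\mapsto 1$, $\tau_s\mapsto s$; and $\pi_P:VA[\Gamma]\to W[\Gamma]$, $\sigma_s\mapsto s$, $\tau_s\mapsto s$. Set $KVA[\Gamma]=\ker\pi_K$ and $PVA[\Gamma]=\ker\pi_P$. Let $V$ be the real vector space with basis $\{\alpha_s\mid s\in S\}$ (simple roots), with the symmetric bilinear form $\langle\alpha_s,\alpha_t\rangle=-2\cos(\pi/m_{s,t})$ if $m_{s,t}\neq\infty$ and $=-2$ if $m_{s,t}=\infty$. $W[\Gamma]$ acts faithfully on $V$ by $s(v)=v-\langle v,\alpha_s\rangle\alpha_s$. For $w\in W[\Gamma]$ and $g$ in $KVA[\Gamma]$ or $PVA[\Gamma]$ (normal subgroups of $VA[\Gamma]$), write $w\cdot g=\iota_W(w)\,g\,\iota_W(w)^{-1}$.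 Note $\sigma_s\in KVA[\Gamma]$ and $\tau_s\sigma_s\in PVA[\Gamma]$. *)

From mathcomp Require Import all_boot.
From Stdlib Require Import Reals.

Set Implicit Arguments.
Unset Strict Implicit.
Unset Printing Implicit Defensive.

(** * Coxeter matrices.  [m s t = None] encodes [m_{s,t} = infinity]. *)
Definition coxeter_matrix (S : eqType) (m : S -> S -> option nat) : Prop :=
  (forall s, m s s = Some 1%N) /\
  (forall s t, m s t = m t s) /\
  (forall s t, s <> t ->
     match m s t with Some k => (2 <= k)%N | None => true end).

(** An element of V (real vector space with basis the alpha_s) is represented
    by a finite formal linear combination [l : seq (S * R)] standing for
    sum_{(x,c) in l} c * alpha_x; two such represent the same vector iff
    they have the same coefficient functions [coef]. *)
Definition bform (S : eqType) (m : S -> S -> option nat) (x y : S) : R :=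
  match m x y with
  | Some k => (- 2 * cos (PI / INR k))%R
  | None => (-2)%R
  end.

Definition coef (S : eqType) (l : seq (S * R)) (x : S) : R :=
  foldr (fun p acc => ((if p.1 == x then p.2 else 0) + acc)%R) 0%R l.

Definition form_alpha (S : eqType) (m : S -> S -> option nat)
  (l : seq (S * R)) (s : S) : R :=
  foldr (fun p acc => (p.2 * bform m p.1 s + acc)%R) 0%R l.

Definition refl_act (S : eqType) (m : S -> S -> option nat) (s : S)
  (l : seq (S * R)) : seq (S * R) :=
  l ++ [:: (s, (- form_alpha m l s)%R)].

(** The element of W represented by the word [s1; ...; sk] (= s1 s2 ... sk)
    acts by v |-> s1 (s2 (... (sk v)...)). *)
Definition wact (S : eqType) (m : S -> S -> option nat) (w : seq S)
  (l : seq (S * R)) : seq (S * R) :=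
  foldr (refl_act m) l w.

Definition alpha (S : eqType) (s : S) : seq (S * R) := [:: (s, 1%R)].

Inductive vgen (S : Type) : Type := Sig of S | Tau of S.

(** letters of the free group: (generator, is_inverse) *)
Definition letter (S : Type) : Type := (vgen S * bool)%type.

Definition gen (S : Type) (g : vgen S) : letter S := (g, false).
Definition flip (S : Type) (x : letter S) : letter S := (x.1, ~~ x.2).
Definition winv (S : Type) (w : seq (letter S)) : seq (letter S) :=
  rev (map (@flip S) w).

(** Pi_R(b, a, n): alternating word ... b a b a of length n ending with a. *)
Fixpoint piR (T : Type) (b a : T) (n : nat) : seq T :=
  match n with
  | 0 => [::]
  | n'.+1 => rcons (piR a b n') a
  end.

Inductive va_rel (S : eqType) (m : S -> S -> option nat) :
  seq (letter S) -> seq (letter S) -> Prop :=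
| va_v1 s t k : s <> t -> m s t = Some k ->
    va_rel m (piR (gen (Sig t)) (gen (Sig s)) k) (piR (gen (Sig s)) (gen (Sig t)) k)
| va_v2 s t k : s <> t -> m s t = Some k ->
    va_rel m (piR (gen (Tau t)) (gen (Tau s)) k) (piR (gen (Tau s)) (gen (Tau t)) k)
| va_v2sq s : va_rel m [:: gen (Tau s); gen (Tau s)] [::]
| va_v3 s t k : s <> t -> m s t = Some k ->
    va_rel m (piR (gen (Tau s)) (gen (Tau t)) k.-1 ++ [:: gen (Sig s)])
             (gen (Sig (if odd k then t else s)) :: piR (gen (Tau s)) (gen (Tau t)) k.-1).

(** equality of the elements of VA[Gamma] represented by two words:
    the congruence on words generated by free reduction and the relations. *)
Inductive va_eq (S : eqType) (m : S -> S -> option nat) :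
  seq (letter S) -> seq (letter S) -> Prop :=
| va_refl w : va_eq m w w
| va_sym w1 w2 : va_eq m w1 w2 -> va_eq m w2 w1
| va_trans w1 w2 w3 : va_eq m w1 w2 -> va_eq m w2 w3 -> va_eq m w1 w3
| va_cong x y a b : va_eq m a b -> va_eq m (x ++ a ++ y) (x ++ b ++ y)
| va_free x : va_eq m [:: x; flip x] [::]
| va_relator a b : va_rel m a b -> va_eq m a b.

Definition iotaW (S : Type) (u : seq S) : seq (letter S) :=
  map (fun s => gen (Tau s)) u.

Definition wconj (S : Type) (u : seq S) (g : seq (letter S)) : seq (letter S) :=
  iotaW u ++ g ++ winv (iotaW u).

From mathcomp Require Import all_boot zify.
From Stdlib Require Import Reals Lra Lia Classical Wf_nat.

Set Implicit Arguments.
Unset Strict Implicit.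
Unset Printing Implicit Defensive.

(* It suffices to show that if [w(alpha_s) = alpha_t] then
   [iota_W(w)] conjugates [sigma_s] to [sigma_t] and [tau_s sigma_s] to
   [tau_t sigma_t] (take [w = v^-1 u]).  We may assume [w] reduced; then [w s]
   is reduced as well, since otherwise [w(alpha_s)] would be a negative root.
   By induction on the length of [w], with [w s] reduced, we prove at the same
   time that [w(alpha_s)] is nonnegative.  Write [w = v y] with [y] in the
   dihedral parabolic subgroup on [r, s] ([r] the last letter of [w]) and [v]
   shortest; then [v r] and [v s] are reduced, [y] is an alternating word of
   length [j < m_(r,s)], and
     [w(alpha_s) = U_(j+1) v(alpha_p) + U_j v(alpha_q)],  [{p, q} = {r, s}],
   with nonnegative Chebyshev coefficients [U].  This gives positivity, and if
   [w(alpha_s)] is a simple root [alpha_t], then [U_(j+1) = 0] (two distinct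
   roots [v(alpha_p)], [v(alpha_q)] are never collinear), so [j = m_(r,s) - 1],
   [v(alpha_q) = alpha_t], and relation (v3) for [y] closes the induction. *)

Lemma ex_minimal_nat (P : nat -> Prop) :
  (exists n, P n) -> exists n, P n /\ forall k, P k -> (n <= k)%N.
Proof.
move=> h; have [n [[Pn nmin] _]] :=
  dec_inh_nat_subset_has_unique_least_element P (fun n => classic (P n)) h.
by exists n; split=> // k /nmin /leP.
Qed.

Lemma size_piR (T : Type) (a b : T) n : size (piR a b n) = n.
Proof. by elim: n a b => [|n IH] a b //=; rewrite size_rcons IH. Qed.

Lemma map_piR (T1 T2 : Type) (f : T1 -> T2) a b n :
  map f (piR a b n) = piR (f a) (f b) n.
Proof. by elim: n a b => [|n IH] a b //=; rewrite map_rcons IH. Qed.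

Lemma piR_addn (T : Type) (a b : T) n q :
  piR a b (n + q) = (if odd q then piR b a n else piR a b n) ++ piR a b q.
Proof.
elim: q a b => [|q IH] a b; first by rewrite addn0 cats0.
by rewrite addnS /= IH rcons_cat; case: (odd q).
Qed.

(* [chebU c n] is the Chebyshev polynomial [U_(n-1)(c/2)]. *)
Fixpoint chebU (c : R) (n : nat) : R :=
  match n with
  | 0 => 0%R
  | 1 => 1%R
  | (n'.+1 as n1).+1 => (c * chebU c n1 - chebU c n')%R
  end.

Lemma chebU_SS c n : chebU c n.+2 = (c * chebU c n.+1 - chebU c n)%R.
Proof. by []. Qed.

Lemma chebU_2 n : chebU 2 n = INR n.
Proof.
suff: chebU 2 n = INR n /\ chebU 2 n.+1 = INR n.+1 by case.
elim: n => [|n [h1 h2]]; first by [].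
by split=> //; rewrite chebU_SS h1 h2 !S_INR; ring.
Qed.

Section ChebyshevDihedral.
Variable k : nat.
Hypothesis k_ge2 : (2 <= k)%N.
Let th := (PI / INR k)%R.

Lemma INR_k_gt0 : (0 < INR k)%R.
Proof. by apply/lt_0_INR/ltP; apply: leq_trans k_ge2. Qed.

Lemma INR_mul_th j : (INR j * th * INR k = INR j * PI)%R.
Proof. by rewrite /th; field; have := INR_k_gt0; lra. Qed.

Lemma th_gt0 : (0 < th)%R.
Proof. exact: Rdiv_lt_0_compat PI_RGT_0 INR_k_gt0. Qed.

Lemma INR_mul_th_le j : (j <= k)%N -> (INR j * th <= PI)%R.
Proof.
move=> /leP /le_INR jk; apply: (Rmult_le_reg_r (INR k)); first exact: INR_k_gt0.
by rewrite INR_mul_th; have := PI_RGT_0; nra.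
Qed.

Lemma INR_mul_th_lt j : (j < k)%N -> (INR j * th < PI)%R.
Proof.
move=> /ltP /lt_INR jk; apply: (Rmult_lt_reg_r (INR k)); first exact: INR_k_gt0.
by rewrite INR_mul_th; have := PI_RGT_0; nra.
Qed.

Lemma sin_th_gt0 : (0 < sin th)%R.
Proof.
apply: sin_gt_0; first exact: th_gt0.
by have := @INR_mul_th_lt 1 k_ge2; rewrite /= Rmult_1_l.
Qed.

Lemma chebU_cos j : chebU (2 * cos th) j = (sin (INR j * th) / sin th)%R.
Proof.
have hs := sin_th_gt0.
suff: chebU (2 * cos th) j = (sin (INR j * th) / sin th)%R /\
      chebU (2 * cos th) j.+1 = (sin (INR j.+1 * th) / sin th)%R by case.
elim: j => [|j [h1 h2]].
  by rewrite /= Rmult_0_l sin_0 Rmult_1_l; split; field; lra.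
split=> //; rewrite chebU_SS h1 h2.
have -> : (INR j.+2 * th = INR j.+1 * th + th)%R by rewrite (S_INR j.+1); ring.
have -> : (INR j * th = INR j.+1 * th - th)%R by rewrite (S_INR j); ring.
by rewrite sin_plus sin_minus; field; lra.
Qed.

Lemma chebU_cos_gt0 j : (0 < j < k)%N -> (0 < chebU (2 * cos th) j)%R.
Proof.
case/andP=> j0 jk; rewrite chebU_cos; apply: Rdiv_lt_0_compat sin_th_gt0.
apply: sin_gt_0; last exact: INR_mul_th_lt.
by apply: Rmult_lt_0_compat th_gt0; apply/lt_0_INR/ltP.
Qed.

Lemma chebU_cos_ge0 j : (j <= k)%N -> (0 <= chebU (2 * cos th) j)%R.
Proof.
move=> jk; rewrite chebU_cos; apply: Rmult_le_pos; last first.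
  exact/Rlt_le/Rinv_0_lt_compat/sin_th_gt0.
apply: sin_ge_0; last exact: INR_mul_th_le.
exact: Rmult_le_pos (pos_INR j) (Rlt_le _ _ th_gt0).
Qed.

Lemma chebU_cos_k : chebU (2 * cos th) k = 0%R.
Proof.
rewrite chebU_cos (_ : INR k * th = PI)%R ?sin_PI /Rdiv ?Rmult_0_l //.
by rewrite /th; field; have := INR_k_gt0; lra.
Qed.

Lemma chebU_cos_predk : chebU (2 * cos th) k.-1 = 1%R.
Proof.
have hs := sin_th_gt0; have hk := INR_k_gt0.
have ek : INR k = (INR k.-1 + 1)%R by rewrite -S_INR prednK // ltnW.
rewrite chebU_cos (_ : INR k.-1 * th = PI - th)%R; last by rewrite /th ek; field; lra.
by rewrite sin_PI_x; field; lra.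
Qed.

Lemma chebU_cos_succk : chebU (2 * cos th) k.+1 = (-1)%R.
Proof.
have hs := sin_th_gt0; have hk := INR_k_gt0.
rewrite chebU_cos (_ : INR k.+1 * th = PI + th)%R; last by rewrite S_INR /th; field; lra.
by rewrite sin_plus sin_PI cos_PI; field; lra.
Qed.

End ChebyshevDihedral.

Section Coxeter.
Variables (S : eqType) (m : S -> S -> option nat).
Local Notation vec := (seq (S * R)).
Local Notation form := (form_alpha m).
Implicit Types (x r s t : S) (l : vec) (w : seq S) (c : R).

(** * The geometric representation *)

Definition veq l1 l2 := forall x, coef l1 x = coef l2 x.

Lemma veq_sym l1 l2 : veq l1 l2 -> veq l2 l1.
Proof. by move=> h x; rewrite h. Qed.

Lemma veq_trans l1 l2 l3 : veq l1 l2 -> veq l2 l3 -> veq l1 l3.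
Proof. by move=> h1 h2 x; rewrite h1 h2. Qed.

Lemma coef_cat l1 l2 x : coef (l1 ++ l2) x = (coef l1 x + coef l2 x)%R.
Proof. by elim: l1 => [|p l IH] /=; [ring | rewrite IH; ring]. Qed.

Lemma form_cat l1 l2 s : form (l1 ++ l2) s = (form l1 s + form l2 s)%R.
Proof. by elim: l1 => [|p l IH] /=; [ring | rewrite IH; ring]. Qed.

Lemma veq_cat l1 l2 l3 l4 : veq l1 l2 -> veq l3 l4 -> veq (l1 ++ l3) (l2 ++ l4).
Proof. by move=> h1 h2 x; rewrite !coef_cat h1 h2. Qed.

Definition vscale c l : vec := map (fun p => (p.1, c * p.2)%R) l.

Lemma coef_scale c l x : coef (vscale c l) x = (c * coef l x)%R.
Proof. by elim: l => [|p l IH] /=; [ring | rewrite IH; case: eqP => _; ring]. Qed.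

Lemma form_scale c l s : form (vscale c l) s = (c * form l s)%R.
Proof. by elim: l => [|p l IH] /=; [ring | rewrite IH; ring]. Qed.

Lemma veq_scale c l1 l2 : veq l1 l2 -> veq (vscale c l1) (vscale c l2).
Proof. by move=> h x; rewrite !coef_scale h. Qed.

Lemma coef_alpha s x : coef (alpha s) x = if s == x then 1%R else 0%R.
Proof. by rewrite /= Rplus_0_r. Qed.

Lemma form_alpha_alpha s t : form (alpha s) t = bform m s t.
Proof. by rewrite /= Rmult_1_l Rplus_0_r. Qed.

Definition sum_over (D : seq S) (f : S -> R) : R :=
  foldr (fun x acc => (f x + acc)%R) 0%R D.

Lemma eq_sum_over D f g : (forall x, f x = g x) -> sum_over D f = sum_over D g.
Proof. by move=> h; elim: D => [|x D IH] //=; rewrite IH h. Qed.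

Lemma sum_over_add D f g :
  sum_over D (fun x => f x + g x)%R = (sum_over D f + sum_over D g)%R.
Proof. by elim: D => [|x D IH] /=; [ring | rewrite IH; ring]. Qed.

Lemma sum_over_delta D a (f : S -> R) : uniq D ->
  sum_over D (fun x => if a == x then f x else 0%R) = if a \in D then f a else 0%R.
Proof.
elim: D => [|x D IH] //= /andP [xD uD]; rewrite inE IH //.
case: (a =P x) => [->|_] /=; last by rewrite Rplus_0_l.
by rewrite (negPf xD) Rplus_0_r.
Qed.

Lemma form_sum_over l s D : uniq D -> {subset map fst l <= D} ->
  form l s = sum_over D (fun x => coef l x * bform m x s)%R.
Proof.
move=> uD; elim: l => [|p l IH] lD /=.
  by elim: D {uD lD} => [|x D IHD] //=; rewrite -IHD; ring.
have pD : p.1 \in D by apply: lD; rewrite inE eqxx.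
rewrite IH => [|x xl]; last by apply: lD; rewrite inE xl orbT.
have := @sum_over_delta D p.1 (fun x => p.2 * bform m x s)%R uD; rewrite pD => <-.
by rewrite -sum_over_add; apply: eq_sum_over => x; case: eqP => _; ring.
Qed.

Lemma form_veq l1 l2 s : veq l1 l2 -> form l1 s = form l2 s.
Proof.
move=> h; set D := undup (map fst (l1 ++ l2)).
have uD : uniq D := undup_uniq _.
rewrite (@form_sum_over l1 s D uD) => [|x]; last first.
  by rewrite mem_undup map_cat mem_cat => ->.
rewrite (@form_sum_over l2 s D uD) => [|x]; last first.
  by rewrite mem_undup map_cat mem_cat orbC => ->.
by apply: eq_sum_over => x; rewrite h.
Qed.

Lemma coef_refl s l x :
  coef (refl_act m s l) x = (coef l x - (if s == x then form l s else 0))%R.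
Proof. by rewrite /refl_act coef_cat /=; case: eqP => _; ring. Qed.

Lemma form_refl s l t :
  form (refl_act m s l) t = (form l t - form l s * bform m s t)%R.
Proof. by rewrite /refl_act form_cat /=; ring. Qed.

Lemma refl_veq s l1 l2 : veq l1 l2 -> veq (refl_act m s l1) (refl_act m s l2).
Proof. by move=> h x; rewrite !coef_refl h (form_veq s h). Qed.

Lemma wact_veq w l1 l2 : veq l1 l2 -> veq (wact m w l1) (wact m w l2).
Proof. by elim: w => [|s w IH] //= h; apply/refl_veq/IH. Qed.

Lemma wact_cat w1 w2 l : wact m (w1 ++ w2) l = wact m w1 (wact m w2 l).
Proof. exact: foldr_cat. Qed.

Lemma wact_rcons w s l : wact m (rcons w s) l = wact m w (refl_act m s l).
Proof. by rewrite -cats1 wact_cat. Qed.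

Lemma wact_add w l1 l2 : veq (wact m w (l1 ++ l2)) (wact m w l1 ++ wact m w l2).
Proof.
elim: w => [|s w IH] //=; apply: veq_trans (refl_veq s IH) _ => x.
by rewrite coef_cat !coef_refl coef_cat form_cat; case: eqP => _; ring.
Qed.

Lemma wact_scale w c l : veq (wact m w (vscale c l)) (vscale c (wact m w l)).
Proof.
elim: w => [|s w IH] //=; apply: veq_trans (refl_veq s IH) _ => x.
by rewrite coef_scale !coef_refl coef_scale form_scale; case: eqP => _; ring.
Qed.

Lemma wact_comb w a b l1 l2 :
  veq (wact m w (vscale a l1 ++ vscale b l2))
      (vscale a (wact m w l1) ++ vscale b (wact m w l2)).
Proof. by apply: veq_trans (wact_add _ _ _) _; apply: veq_cat; apply: wact_scale. Qed.

Hypothesis hm : coxeter_matrix m.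

Lemma bform_diag s : bform m s s = 2%R.
Proof. by case: hm => h1 _; rewrite /bform h1 /= Rdiv_1_r cos_PI; ring. Qed.

Lemma m_sym s t : m s t = m t s.
Proof. by case: hm => _ []. Qed.

Lemma bform_sym s t : bform m s t = bform m t s.
Proof. by rewrite /bform m_sym. Qed.

Lemma refl_alpha s : veq (refl_act m s (alpha s)) (vscale (-1) (alpha s)).
Proof.
move=> x; rewrite coef_refl coef_scale coef_alpha form_alpha_alpha bform_diag.
by case: eqP => _; ring.
Qed.

Lemma refl_actK s l : veq (refl_act m s (refl_act m s l)) l.
Proof. by move=> x; rewrite !coef_refl form_refl bform_diag; case: eqP => _; ring. Qed.

Lemma wact_revK w l : veq (wact m (rev w) (wact m w l)) l.
Proof.
elim: w l => [|s w IH] l //=; rewrite rev_cons wact_rcons.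
by apply: veq_trans (IH l); apply/wact_veq/refl_actK.
Qed.

(** * Dihedral subgroups *)

Lemma refl_alpha_other a b c : bform m b a = (- c)%R ->
  veq (refl_act m b (alpha a)) (alpha a ++ vscale c (alpha b)).
Proof.
move=> hba x; rewrite coef_refl coef_cat coef_scale !coef_alpha form_alpha_alpha.
by rewrite (bform_sym a) hba; case: eqP => _; case: eqP => _; ring.
Qed.

Lemma wact_piR_alpha_SS a b c j : bform m b a = (- c)%R ->
  veq (wact m (piR a b j.+2) (alpha a))
      (vscale (-1) (wact m (piR a b j) (alpha a)) ++
       vscale c (wact m (piR b a j.+1) (alpha b))).
Proof.
move=> hba; rewrite [piR a b _]/= wact_rcons.
apply: veq_trans (wact_veq _ (refl_alpha_other hba)) _.
apply: veq_trans (wact_add _ _ _) _; apply: veq_cat; last exact: wact_scale.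
rewrite wact_rcons.
by apply: veq_trans (wact_veq _ (refl_alpha a)) _; apply: wact_scale.
Qed.

Lemma wact_piR_alpha a b c j : a != b -> bform m b a = (- c)%R ->
  veq (wact m (piR a b j) (alpha a))
      (vscale (chebU c j.+1) (alpha (if odd j then b else a)) ++
       vscale (chebU c j) (alpha (if odd j then a else b))).
Proof.
move=> ab hba; have hab : bform m a b = (- c)%R by rewrite bform_sym.
have ba : b != a by rewrite eq_sym.
elim: j {-2}j (leqnn j) a b ab ba hab hba => [|n IH] j jn a b ab ba hab hba.
  by move: jn; rewrite leqn0 => /eqP -> x /=; case: eqP => _; case: eqP => _; ring.
case: j jn => [|[|j]] jn.
- by move=> x /=; case: eqP => _; case: eqP => _; ring.
- apply: veq_trans (refl_alpha_other hba) _ => x.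
  by rewrite !coef_cat !coef_scale !coef_alpha /=; case: eqP => _; case: eqP => _; ring.
apply: veq_trans (wact_piR_alpha_SS j hba) _.
apply: veq_trans (veq_cat (veq_scale _ (IH j (ltnW jn) a b ab ba hab hba))
                          (veq_scale _ (IH j.+1 jn b a ba ab hba hab))) _.
move=> x; rewrite !coef_cat !coef_scale !coef_alpha !chebU_SS /=.
move/negPf: ab => ab; move/negPf: ba => ba.
case: (odd j) => /=; case: (a =P x) => [<-|_]; rewrite ?eqxx ?ab ?ba;
  try case: (b =P x) => _; ring.
Qed.

Lemma m_ge2 s t k : s != t -> m s t = Some k -> (2 <= k)%N.
Proof. by case: hm => _ [_ h] /eqP st e; have := h s t st; rewrite e. Qed.

Lemma bform_Some s t k : m s t = Some k -> bform m s t = (- (2 * cos (PI / INR k)))%R.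
Proof. by rewrite /bform => ->; ring. Qed.

Lemma wact_braid_alpha s t k : s != t -> m s t = Some k ->
  veq (wact m (piR t s k) (alpha s)) (wact m (piR s t k) (alpha s)).
Proof.
move=> st e; have k2 := m_ge2 st e.
have hts : bform m t s = (- (2 * cos (PI / INR k)))%R by rewrite bform_sym (bform_Some e).
case: k e k2 hts => [|k] // e k2 hts.
rewrite [piR t s _]/= wact_rcons.
apply: veq_trans (wact_veq _ (refl_alpha s)) _.
apply: veq_trans (wact_scale _ _ _) _.
apply: veq_trans (veq_scale _ (wact_piR_alpha k st hts)) _.
apply: veq_sym; apply: veq_trans (wact_piR_alpha k.+1 st hts) _.
have e1 : chebU (2 * cos (PI / INR k.+1)) k = 1%R := chebU_cos_predk k2.
rewrite chebU_cos_k // chebU_cos_succk // e1 => x.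
rewrite !coef_cat !coef_scale !coef_alpha /=.
move/negPf: st => st; rewrite eq_sym in st.
case: (odd k) => /=; case: (s =P x) => [<-|_]; rewrite ?eqxx ?st;
  try case: (t =P x) => _; ring.
Qed.

Lemma all_piR s t n : all (mem [:: s; t]) (piR s t n) /\ all (mem [:: s; t]) (piR t s n).
Proof.
elim: n => [|n [h1 h2]] //=.
by rewrite !all_rcons h1 h2 !inE !eqxx orbT.
Qed.

Lemma wact_fix_orth s t z w : all (mem [:: s; t]) w ->
  form z s = 0%R -> form z t = 0%R -> veq (wact m w z) z.
Proof.
move=> hw hs ht; elim: w hw => [|a w IH] //= /andP [ha /IH hw].
apply: veq_trans (refl_veq _ hw) _ => x; rewrite coef_refl.
by move: ha; rewrite !inE => /orP [] /eqP ->; rewrite ?hs ?ht; case: eqP => _; ring.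
Qed.

(* As [c^2 < 4], the Gram matrix of [alpha_s, alpha_t] is invertible, so every
   vector is a combination of [alpha_s], [alpha_t] plus a vector orthogonal to
   both, which is fixed by the dihedral group. *)
Lemma wact_dihedral_ext s t k w1 w2 : s != t -> m s t = Some k ->
  all (mem [:: s; t]) w1 -> all (mem [:: s; t]) w2 ->
  veq (wact m w1 (alpha s)) (wact m w2 (alpha s)) ->
  veq (wact m w1 (alpha t)) (wact m w2 (alpha t)) ->
  forall l, veq (wact m w1 l) (wact m w2 l).
Proof.
move=> st e h1 h2 hs ht l.
have k2 := m_ge2 st e.
set c := (2 * cos (PI / INR k))%R.
have hst : bform m s t = (- c)%R by rewrite (bform_Some e).
have hts : bform m t s = (- c)%R by rewrite bform_sym.
have hc : (c * c < 4)%R.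
  have := sin2_cos2 (PI / INR k); rewrite /Rsqr.
  have := Rmult_lt_0_compat _ _ (sin_th_gt0 k2) (sin_th_gt0 k2).
  by rewrite /c; nra.
set p := form_alpha m l s; set q := form_alpha m l t; set d := (4 - c * c)%R.
set la := ((2 * p + c * q) / d)%R; set mu := ((2 * q + c * p) / d)%R.
set z := l ++ vscale (- la) (alpha s) ++ vscale (- mu) (alpha t).
have zs : form z s = 0%R.
  rewrite /z !form_cat !form_scale !form_alpha_alpha bform_diag hts -/p /la /mu /d.
  by field; lra.
have zt : form z t = 0%R.
  rewrite /z !form_cat !form_scale !form_alpha_alpha bform_diag hst -/q /la /mu /d.
  by field; lra.
have el : veq l (z ++ vscale la (alpha s) ++ vscale mu (alpha t)).
  move=> x; rewrite /z !coef_cat !coef_scale !coef_alpha.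
  by case: eqP => _; case: eqP => _; ring.
have key w : all (mem [:: s; t]) w -> veq (wact m w l)
    (z ++ vscale la (wact m w (alpha s)) ++ vscale mu (wact m w (alpha t))).
  move=> hw; apply: veq_trans (wact_veq _ el) _.
  apply: veq_trans (wact_add _ _ _) _.
  exact: veq_cat (wact_fix_orth hw zs zt) (wact_comb _ _ _ _ _).
apply: veq_trans (key _ h1) _; apply: veq_trans _ (veq_sym (key _ h2)) => x.
by rewrite !coef_cat !coef_scale hs ht.
Qed.

Lemma wact_braid s t k : s != t -> m s t = Some k ->
  forall l, veq (wact m (piR t s k) l) (wact m (piR s t k) l).
Proof.
move=> st e; have [hst hts] := all_piR s t k.
apply: (wact_dihedral_ext st e hts hst); first exact: wact_braid_alpha.
by apply/veq_sym/wact_braid_alpha; rewrite 1?eq_sym // m_sym.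
Qed.

(** * Words in the Coxeter group *)

Inductive cox_eq : seq S -> seq S -> Prop :=
| cox_refl w : cox_eq w w
| cox_sym w1 w2 : cox_eq w1 w2 -> cox_eq w2 w1
| cox_trans w1 w2 w3 : cox_eq w1 w2 -> cox_eq w2 w3 -> cox_eq w1 w3
| cox_cong w0 w1 w2 w3 : cox_eq w1 w2 -> cox_eq (w0 ++ w1 ++ w3) (w0 ++ w2 ++ w3)
| cox_sq s : cox_eq [:: s; s] [::]
| cox_braid s t k : s <> t -> m s t = Some k -> cox_eq (piR t s k) (piR s t k).

Lemma cox_eq_cat w1 w1' w2 w2' :
  cox_eq w1 w1' -> cox_eq w2 w2' -> cox_eq (w1 ++ w2) (w1' ++ w2').
Proof.
move=> h1 h2; apply: (@cox_trans _ (w1' ++ w2)).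
  by have := cox_cong [::] w2 h1.
by have := cox_cong w1' [::] h2; rewrite !cats0.
Qed.

Lemma odd_size_cox_eq w1 w2 : cox_eq w1 w2 -> odd (size w1) = odd (size w2).
Proof.
elim=> [//|w w' _ -> //|w w' w'' _ -> _ -> //|w0 w w' w3 _ h|//|s t k _ _].
  by rewrite !size_cat !oddD h.
by rewrite !size_piR.
Qed.

Lemma wact_cox_eq w1 w2 : cox_eq w1 w2 -> forall l, veq (wact m w1 l) (wact m w2 l).
Proof.
elim=> {w1 w2} [w l|w w' _ h l|w w' w'' _ h _ h' l|w0 w w' w3 _ h l|s l|s t k st e].
- by [].
- exact/veq_sym/h.
- exact: veq_trans (h l) (h' l).
- by rewrite !wact_cat; apply/wact_veq/h.
- exact: refl_actK.
- by apply: wact_braid => //; apply/eqP.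
Qed.

Definition reduced w := forall w', cox_eq w w' -> (size w <= size w')%N.

(* Shortening a word changes its length by an even number. *)
Lemma not_reducedP w : ~ reduced w ->
  exists w', cox_eq w w' /\ (size w' + 2 <= size w)%N.
Proof.
move=> h; have [w' [ww' lt_w'w]] : exists w', cox_eq w w' /\ (size w' < size w)%N.
  apply: NNPP => hn; apply: h => w' ww'; rewrite leqNgt; apply/negP => lt_w'w.
  by apply: hn; exists w'.
exists w'; split=> //; have := odd_size_cox_eq ww'.
rewrite addn2 ltn_neqAle lt_w'w andbT; apply: contra_eqN => /eqP <- /=.
by case: (odd _).
Qed.

Lemma exists_reduced w : exists w', cox_eq w w' /\ reduced w'.
Proof.
have [N] := ubnP (size w); elim: N w => // N IH w /ltnSE le_wN.
case: (classic (reduced w)) => [rw|/not_reducedP [w' [ww' le_w'w]]].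
  by exists w; split=> //; apply: cox_refl.
have [w'' [w'w'' rw'']] : exists w'', cox_eq w' w'' /\ reduced w''.
  by apply: IH; apply: leq_trans le_wN; apply: leq_trans le_w'w; rewrite addn2.
by exists w''; split=> //; apply: cox_trans w'w''.
Qed.

Lemma reduced_infix w0 w w1 : reduced (w0 ++ w ++ w1) -> reduced w.
Proof.
move=> h w' ww'; have := h _ (cox_cong w0 w1 ww').
by rewrite !size_cat leq_add2l leq_add2r.
Qed.

Lemma reduced_prefix w1 w2 : reduced (w1 ++ w2) -> reduced w1.
Proof. by move=> h; apply: (@reduced_infix [::] w1 w2). Qed.

Lemma reduced_suffix w1 w2 : reduced (w1 ++ w2) -> reduced w2.
Proof. by move=> h; apply: (@reduced_infix w1 w2 [::]); rewrite cats0. Qed.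

Lemma reduced_rcons_neq w r s : reduced (rcons (rcons w r) s) -> r != s.
Proof.
move=> h; apply/eqP => rs; subst r.
move: h; rewrite -!cats1 -catA => /(_ _ (cox_cong w [::] (cox_sq s))).
by rewrite !size_cat /=; lia.
Qed.

Lemma reduced_dihedral_rcons a b z : a != b -> all (mem [:: a; b]) z ->
  reduced (rcons z b) -> rcons z b = piR a b (size z).+1.
Proof.
elim/last_ind: z a b => [|z x IH] a b ab hz hr //.
rewrite all_rcons in hz; case/andP: hz => hx hz.
have xa : x = a.
  move: hx; rewrite !inE => /orP [/eqP //|/eqP xb].
  by have := reduced_rcons_neq hr; rewrite xb eqxx.
subst x.
have ba : b != a by rewrite eq_sym.
rewrite size_rcons (IH b a ba) //; last by rewrite -cats1 in hr; apply: reduced_prefix hr.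
by apply/allP => y /(allP hz); rewrite !inE orbC.
Qed.

Lemma not_reduced_piR a b k : a != b -> m a b = Some k -> ~ reduced (piR a b k.+1).
Proof.
move=> ab e hr; have k2 := m_ge2 ab e.
case: k e k2 hr => [|k] // e _ hr.
have e' : m b a = Some k.+1 by rewrite m_sym.
pose x := if odd k then b else a.
have ha : piR a b k.+2 = [:: x] ++ piR a b k.+1.
  by have := piR_addn a b 1 k.+1; rewrite add1n /x /=; case: (odd k).
have hb : piR b a k.+1 = [:: x] ++ piR b a k.
  by have := piR_addn b a 1 k; rewrite add1n /x /=; case: (odd k).
have : cox_eq (piR a b k.+2) (piR b a k).
  rewrite ha; apply: (@cox_trans _ ([:: x] ++ piR b a k.+1)).
    apply: cox_eq_cat (cox_refl _) (cox_braid _ e') => ba.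
    by move: ab; rewrite ba eqxx.
  by rewrite hb catA; have := cox_cong [::] (piR b a k) (cox_sq x).
by move/hr; rewrite !size_piR; lia.
Qed.

Lemma reduced_piR_le a b k n : a != b -> m a b = Some k -> reduced (piR a b n) -> (n <= k)%N.
Proof.
move=> ab e hr; rewrite leqNgt; apply/negP => lt_kn; apply: (not_reduced_piR ab e).
by move: hr; rewrite -(subnK lt_kn) piR_addn; apply: reduced_suffix.
Qed.

(** * Transport of generators in the virtual Artin group *)

Local Notation va_eq := (va_eq m).

Lemma va_eq_cat g1 g1' g2 g2' : va_eq g1 g1' -> va_eq g2 g2' -> va_eq (g1 ++ g2) (g1' ++ g2').
Proof.
move=> h1 h2; apply: (@va_trans _ _ _ (g1' ++ g2)).
  by have := va_cong [::] g2 h1.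
by have := va_cong g1' [::] h2; rewrite !cats0.
Qed.

Lemma iotaW_cat w1 w2 : iotaW (w1 ++ w2) = iotaW w1 ++ iotaW w2.
Proof. exact: map_cat. Qed.

Lemma va_eq_iotaW w1 w2 : cox_eq w1 w2 -> va_eq (iotaW w1) (iotaW w2).
Proof.
elim=> {w1 w2} [w|w w' _ h|w w' w'' _ h _ h'|w0 w w' w3 _ h|s|s t k st e].
- exact: va_refl.
- exact: va_sym.
- exact: va_trans h h'.
- by rewrite !iotaW_cat; apply: va_eq_cat (va_refl _ _) (va_eq_cat h (va_refl _ _)).
- exact/va_relator/va_v2sq.
- by rewrite /iotaW !map_piR; apply/va_relator/va_v2.
Qed.

Lemma va_eq_tau_inv s : va_eq [:: flip (gen (Tau s))] [:: gen (Tau s)].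
Proof.
apply: (@va_trans _ _ _ ([:: gen (Tau s); gen (Tau s)] ++ [:: flip (gen (Tau s))])).
  exact: va_sym (va_cong [::] _ (va_relator (va_v2sq m s))).
by have := va_cong [:: gen (Tau s)] [::] (va_free m (gen (Tau s))).
Qed.

Lemma va_eq_winv_iotaW w : va_eq (winv (iotaW w)) (iotaW (rev w)).
Proof.
elim: w => [|s w IH]; first exact: va_refl.
rewrite /winv /= !rev_cons -!cats1 iotaW_cat.
exact: va_eq_cat IH (va_eq_tau_inv s).
Qed.

Lemma va_eq_iotaW_revK w : va_eq (iotaW w ++ iotaW (rev w)) [::].
Proof.
elim: w => [|s w IH]; first exact: va_refl.
rewrite rev_cons -cats1 iotaW_cat.
apply: (@va_trans _ _ _ ([:: gen (Tau s)] ++ (iotaW w ++ iotaW (rev w)) ++ iotaW [:: s])).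
  by rewrite !catA; apply: va_refl.
apply: va_trans (va_cong _ _ IH) _.
exact/va_relator/va_v2sq.
Qed.

Definition va_intertwines (g0 g g' : seq (letter S)) := va_eq (g0 ++ g) (g' ++ g0).

Lemma va_intertwines_cat g0 g1 g g' g'' :
  va_intertwines g1 g g' -> va_intertwines g0 g' g'' -> va_intertwines (g0 ++ g1) g g''.
Proof.
rewrite /va_intertwines => h1 h0; rewrite -catA.
apply: va_trans (va_eq_cat (va_refl _ g0) h1) _; rewrite catA.
by apply: va_trans (va_eq_cat h0 (va_refl _ g1)) _; rewrite -catA; apply: va_refl.
Qed.

Lemma va_intertwines_catr g0 g1 g2 g1' g2' :
  va_intertwines g0 g1 g1' -> va_intertwines g0 g2 g2' ->
  va_intertwines g0 (g1 ++ g2) (g1' ++ g2').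
Proof.
rewrite /va_intertwines => h1 h2; rewrite catA.
apply: va_trans (va_eq_cat h1 (va_refl _ g2)) _; rewrite -catA.
by apply: va_trans (va_eq_cat (va_refl _ g1') h2) _; rewrite catA; apply: va_refl.
Qed.

Lemma va_intertwines_cox_eq w1 w2 g g' :
  cox_eq w1 w2 -> va_intertwines (iotaW w1) g g' -> va_intertwines (iotaW w2) g g'.
Proof.
rewrite /va_intertwines => /va_eq_iotaW h1 h.
apply: va_trans (va_eq_cat (va_sym h1) (va_refl _ _)) _.
exact: va_trans h (va_eq_cat (va_refl _ _) h1).
Qed.

(* In the notation of the paper: [w . sigma_s = sigma_t] and
   [w . (tau_s sigma_s) = tau_t sigma_t]. *)
Definition va_transports w s t :=
  va_intertwines (iotaW w) [:: gen (Sig s)] [:: gen (Sig t)] /\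
  va_intertwines (iotaW w) [:: gen (Tau s); gen (Sig s)] [:: gen (Tau t); gen (Sig t)].

Lemma va_transports_nil s : va_transports [::] s s.
Proof. by split; rewrite /va_intertwines cats0; apply: va_refl. Qed.

Lemma va_transports_cat w1 w2 s q t :
  va_transports w2 s q -> va_transports w1 q t -> va_transports (w1 ++ w2) s t.
Proof.
rewrite /va_transports iotaW_cat => -[h2 h2'] [h1 h1'].
by split; [apply: va_intertwines_cat h2 h1 | apply: va_intertwines_cat h2' h1'].
Qed.

Lemma va_transports_cox_eq w1 w2 s t :
  cox_eq w1 w2 -> va_transports w1 s t -> va_transports w2 s t.
Proof. by move=> h [h1 h2]; split; apply: va_intertwines_cox_eq h _. Qed.

Lemma va_intertwines_tau w s t :
  cox_eq (rcons w s) (t :: w) -> va_intertwines (iotaW w) [:: gen (Tau s)] [:: gen (Tau t)].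
Proof. by move/va_eq_iotaW; rewrite /iotaW map_rcons -cats1. Qed.

(* Relation (v3), together with the braid relation (v2) for the [tau]s. *)
Lemma va_transports_dihedral s r k : s != r -> m s r = Some k ->
  va_transports (piR s r k.-1) s (if odd k then r else s).
Proof.
move=> sr e; have k2 := m_ge2 sr e.
have hsig : va_intertwines (iotaW (piR s r k.-1)) [:: gen (Sig s)]
                          [:: gen (Sig (if odd k then r else s))].
  by rewrite /va_intertwines /iotaW map_piR; apply/va_relator/va_v3 => //; apply/eqP.
split=> //; apply: (@va_intertwines_catr _ [:: gen (Tau s)] _
                       [:: gen (Tau (if odd k then r else s))] _ _ hsig).
case: k e k2 {hsig} => [|k] // e _; apply: va_intertwines_tau.
apply: cox_trans (_ : cox_eq (piR r s k.+1) (piR s r k.+1)) _.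
  by apply: cox_braid => // ?; subst; rewrite eqxx in sr.
by have := piR_addn s r 1 k; rewrite add1n => -> /=; case: (odd k); apply: cox_refl.
Qed.

(** * Positive roots *)

Definition nonneg l := forall x, (0 <= coef l x)%R.

Lemma nonneg_alpha s : nonneg (alpha s).
Proof. by move=> x; rewrite coef_alpha; case: eqP => _; lra. Qed.

Lemma nonneg_comb a b l1 l2 : (0 <= a)%R -> (0 <= b)%R ->
  nonneg l1 -> nonneg l2 -> nonneg (vscale a l1 ++ vscale b l2).
Proof.
move=> a0 b0 h1 h2 x; rewrite coef_cat !coef_scale.
by have := h1 x; have := h2 x; nra.
Qed.

Lemma alpha_inj s t : veq (alpha s) (alpha t) -> s = t.
Proof. by move=> /(_ s); rewrite !coef_alpha eqxx; case: eqP => // _; lra. Qed.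

Lemma nonneg_comb_alpha a b l1 l2 t : (0 < a)%R -> (0 < b)%R ->
  nonneg l1 -> nonneg l2 -> veq (vscale a l1 ++ vscale b l2) (alpha t) ->
  veq l1 (vscale (coef l1 t) (alpha t)) /\ veq l2 (vscale (coef l2 t) (alpha t)).
Proof.
move=> a0 b0 h1 h2 h.
have h0 x : x != t -> coef l1 x = 0%R /\ coef l2 x = 0%R.
  move=> xt; have := h x; rewrite coef_cat !coef_scale coef_alpha eq_sym (negPf xt).
  by have := h1 x; have := h2 x; split; nra.
split=> x; rewrite coef_scale coef_alpha; case: (t =P x) => [<-|/eqP]; try ring;
  by rewrite eq_sym => /h0 [h1x h2x]; rewrite ?h1x ?h2x; ring.
Qed.

Lemma wact_alpha_not_collinear w p q t a b : p != q ->
  veq (wact m w (alpha p)) (vscale a (alpha t)) ->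
  veq (wact m w (alpha q)) (vscale b (alpha t)) -> False.
Proof.
move=> pq hp hq; set beta := wact m (rev w) (alpha t).
have back r c : veq (wact m w (alpha r)) (vscale c (alpha t)) -> veq (alpha r) (vscale c beta).
  move=> h; apply: veq_trans (veq_sym (wact_revK w (alpha r))) _.
  exact: veq_trans (wact_veq _ h) (wact_scale _ _ _).
have := back _ _ hp p; have := back _ _ hp q; have := back _ _ hq p; have := back _ _ hq q.
rewrite !coef_scale !coef_alpha !eqxx (negPf pq) eq_sym (negPf pq); nra.
Qed.

Definition parabolic_split w r s v y :=
  [/\ all (mem [:: r; s]) y, cox_eq w (v ++ y) & (size v + size y = size w)%N].

Lemma minimal_split_reduced w r s v y : reduced w -> parabolic_split w r s v y ->
  (forall v' y', parabolic_split w r s v' y' -> (size v <= size v')%N) ->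
  forall x, x \in [:: r; s] -> reduced (rcons v x).
Proof.
move=> rw [hy wvy hsz] vmin x hx; apply: NNPP => /not_reducedP [z [vxz hz]].
have wzxy : cox_eq w (z ++ x :: y).
  apply: cox_trans wvy (cox_trans (_ : cox_eq _ (rcons v x ++ x :: y)) _).
    rewrite -cats1 -catA; apply: cox_eq_cat (cox_refl _) _.
    exact: cox_sym (cox_cong [::] y (cox_sq x)).
  exact: cox_eq_cat vxz (cox_refl _).
rewrite size_rcons in hz.
have split_z : parabolic_split w r s z (x :: y).
  split=> //=; first by rewrite hx.
  by have := rw _ wzxy; rewrite size_cat /=; lia.
by have := vmin _ _ split_z; lia.
Qed.

(* [v] is a shortest left factor of [w r] whose cofactor lies in the parabolic
   subgroup on [r, s]. *)
Lemma reduced_dihedral_split w r s : reduced (rcons (rcons w r) s) ->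
  exists v j, [/\ cox_eq (rcons w r) (v ++ piR s r j), (0 < j)%N, (size v <= size w)%N,
    forall x, x \in [:: r; s] -> reduced (rcons v x) & reduced (piR r s j.+1)].
Proof.
move=> hws; have rs := reduced_rcons_neq hws.
have rwr : reduced (rcons w r) by move: hws; rewrite -cats1; apply: reduced_prefix.
have split_w : parabolic_split (rcons w r) r s w [:: r].
  by split; [rewrite /= inE eqxx | rewrite cats1; apply: cox_refl | rewrite size_rcons addn1].
pose P n := exists v y, size v = n /\ parabolic_split (rcons w r) r s v y.
have [|_ [[v [y [<- [hy wvy hsz]]]] nmin]] := @ex_minimal_nat P.
  by exists (size w), w, [:: r].
have vmin v' y' : parabolic_split (rcons w r) r s v' y' -> (size v <= size v')%N.
  by move=> h; apply: nmin; exists v', y'.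
have le_vw := vmin _ _ split_w.
have rys : reduced (rcons y s).
  move=> z yz; suff /hws : cox_eq (rcons (rcons w r) s) (v ++ z).
    by rewrite size_rcons -hsz !size_cat size_rcons; lia.
  rewrite -cats1; apply: cox_trans (cox_eq_cat wvy (cox_refl [:: s])) _.
  by rewrite -catA cats1; apply: cox_eq_cat (cox_refl _) yz.
have ey : y = piR s r (size y).
  by have := reduced_dihedral_rcons rs hy rys; rewrite [piR r s _]/= => /rcons_inj [].
exists v, (size y); split.
- by rewrite -ey.
- by rewrite size_rcons in hsz; lia.
- exact: le_vw.
- exact: minimal_split_reduced rwr (And3 hy wvy hsz) vmin.
- by rewrite [piR r s _]/= -ey.
Qed.

Lemma chebU_dihedral_coeffs s r c j : s != r -> bform m s r = (- c)%R -> (0 < j)%N ->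
  (forall k, m s r = Some k -> (j < k)%N) ->
  [/\ (0 <= chebU c j.+1)%R, (0 < chebU c j)%R &
      chebU c j.+1 = 0%R -> m s r = Some j.+1 /\ chebU c j = 1%R].
Proof.
move=> sr hc j_gt0; case e: (m s r) => [k|] => [/(_ k erefl) lt_jk|_].
  have k2 := m_ge2 sr e.
  have -> : c = (2 * cos (PI / INR k))%R by move: hc; rewrite (bform_Some e); lra.
  split; [exact: chebU_cos_ge0 | by apply: chebU_cos_gt0; lia | move=> h0].
  case: (ltngtP j.+1 k) => [lt_j1k|lt_kj1|ek]; last by subst k; split=> //; apply: chebU_cos_predk.
    by have := @chebU_cos_gt0 k k2 j.+1 lt_j1k; lra.
  by lia.
have -> : c = 2%R by move: hc; rewrite /bform e; lra.
rewrite !chebU_2; split; [exact: pos_INR | exact/lt_0_INR/ltP | move=> h0].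
by have := pos_INR j; rewrite S_INR in h0; lra.
Qed.

Lemma reduced_wact_alpha w s : reduced (rcons w s) ->
  nonneg (wact m w (alpha s)) /\
  forall t, veq (wact m w (alpha s)) (alpha t) -> va_transports w s t.
Proof.
have [N] := ubnP (size w); elim: N w s => // N IH w s /ltnSE.
case/lastP: w => [_ _|w r le_wN hws].
  by split=> [|t /alpha_inj <-]; [apply: nonneg_alpha | apply: va_transports_nil].
have [v [j [wvy j_gt0 le_vw rvx rrs]]] := reduced_dihedral_split hws.
have IHv x : x \in [:: r; s] -> nonneg (wact m v (alpha x)) /\
    forall t, veq (wact m v (alpha x)) (alpha t) -> va_transports v x t.
  by move=> hx; apply: IH (rvx x hx); rewrite size_rcons in le_wN; lia.
have sr : s != r by rewrite eq_sym (reduced_rcons_neq hws).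
set c := (- bform m s r)%R.
have hsr : bform m s r = (- c)%R by rewrite /c; ring.
have hrs : bform m r s = (- c)%R by rewrite bform_sym.
set p := if odd j then r else s; set q := if odd j then s else r.
have [pP qP] : p \in [:: r; s] /\ q \in [:: r; s].
  by rewrite /p /q; case: (odd j); rewrite !inE !eqxx ?orbT.
have pq : p != q by rewrite /p /q; case: (odd j); rewrite // eq_sym.
have ew : veq (wact m (rcons w r) (alpha s))
    (vscale (chebU c j.+1) (wact m v (alpha p)) ++ vscale (chebU c j) (wact m v (alpha q))).
  apply: veq_trans (wact_cox_eq wvy _) _; rewrite wact_cat.
  exact: veq_trans (wact_veq _ (wact_piR_alpha j sr hrs)) (wact_comb _ _ _ _ _).
have [U1_ge0 U0_gt0 U1_eq0] : [/\ (0 <= chebU c j.+1)%R, (0 < chebU c j)%R &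
    chebU c j.+1 = 0%R -> m s r = Some j.+1 /\ chebU c j = 1%R].
  apply: chebU_dihedral_coeffs sr hsr j_gt0 _ => k e.
  have e' : m r s = Some k by rewrite m_sym.
  exact: reduced_piR_le (reduced_rcons_neq hws) e' rrs.
have [nn_p _] := IHv p pP; have [nn_q tr_q] := IHv q qP.
split=> [x|t ht].
  by rewrite (ew x); apply: (nonneg_comb U1_ge0 (Rlt_le _ _ U0_gt0) nn_p nn_q x).
have U1_0 : chebU c j.+1 = 0%R.
  case: (Rle_lt_or_eq _ _ U1_ge0) => [U1_gt0|//].
  have [hp hq] := nonneg_comb_alpha U1_gt0 U0_gt0 nn_p nn_q (veq_trans (veq_sym ew) ht).
  by case: (wact_alpha_not_collinear pq hp hq).
have [e U0_1] := U1_eq0 U1_0.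
apply: va_transports_cox_eq (cox_sym wvy) _.
apply: va_transports_cat (va_transports_dihedral sr e) _.
have -> : (if odd j.+1 then r else s) = q by rewrite /q /=; case: (odd j).
apply: tr_q => x.
by rewrite -ht (ew x) coef_cat !coef_scale U1_0 U0_1; ring.
Qed.

Lemma not_reduced_rcons w s : reduced w -> ~ reduced (rcons w s) ->
  exists z, cox_eq w (rcons z s) /\ reduced (rcons z s).
Proof.
move=> rw /not_reducedP [z [wsz le_zw]].
have [z' [zz' rz']] := exists_reduced z.
have wz's : cox_eq w (rcons z' s).
  apply: cox_trans (_ : cox_eq w (rcons w s ++ [:: s])) _.
    by rewrite -cats1 -catA; have := cox_cong w [::] (cox_sym (cox_sq s)); rewrite !cats0.
  by rewrite -[rcons z' s]cats1; apply: cox_eq_cat (cox_trans wsz zz') (cox_refl _).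
exists z'; split=> // q z'q; have := rw _ (cox_trans wz's z'q).
have := rz' _ (cox_sym zz'); rewrite size_rcons !size_rcons in le_zw *; lia.
Qed.

Lemma wact_alpha_va_transports w s t :
  veq (wact m w (alpha s)) (alpha t) -> va_transports w s t.
Proof.
move=> h; have [w' [ww' rw']] := exists_reduced w.
have h' := veq_trans (veq_sym (wact_cox_eq ww' (alpha s))) h.
apply: va_transports_cox_eq (cox_sym ww') _.
case: (classic (reduced (rcons w' s))) => [rws|/(not_reduced_rcons rw') [z [w'z rzs]]].
  exact: (reduced_wact_alpha rws).2.
have [nn_z _] := reduced_wact_alpha rzs.
have : veq (wact m w' (alpha s)) (vscale (-1) (wact m z (alpha s))).
  apply: veq_trans (wact_cox_eq w'z _) _; rewrite wact_rcons.
  exact: veq_trans (wact_veq _ (refl_alpha s)) (wact_scale _ _ _).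
by move=> /(_ t); rewrite h' coef_scale coef_alpha eqxx; have := nn_z t; lra.
Qed.

Lemma va_eq_wconj u v g g' :
  va_intertwines (iotaW (rev v ++ u)) g g' -> va_eq (wconj u g) (wconj v g').
Proof.
rewrite /va_intertwines /wconj iotaW_cat => h.
set a := iotaW u; set b := iotaW v; set b' := iotaW (rev v); set a' := iotaW (rev u).
apply: va_trans (va_eq_cat (va_refl _ a) (va_eq_cat (va_refl _ g) (va_eq_winv_iotaW u))) _.
apply: va_trans (va_eq_cat (va_sym (va_eq_iotaW_revK v)) (va_refl _ (a ++ g ++ a'))) _.
have -> : (b ++ b') ++ a ++ g ++ a' = b ++ ((b' ++ a) ++ g) ++ a' by rewrite !catA.
apply: va_trans (va_eq_cat (va_refl _ b) (va_eq_cat h (va_refl _ a'))) _.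
have -> : b ++ (g' ++ b' ++ a) ++ a' = (b ++ g' ++ b') ++ (a ++ a') by rewrite !catA.
apply: va_trans (va_eq_cat (va_refl _ _) (va_eq_iotaW_revK u)) _.
rewrite cats0; apply: va_eq_cat (va_refl _ b) (va_eq_cat (va_refl _ g') _).
exact: va_sym (va_eq_winv_iotaW v).
Qed.

End Coxeter.

Theorem lemma2p2 (S : countType) (m : S -> S -> option nat)
  (hm : coxeter_matrix m) (u v : seq S) (s t : S) :
  (forall x : S, coef (wact m u (alpha s)) x = coef (wact m v (alpha t)) x) ->
  va_eq m (wconj u [:: gen (Sig s)]) (wconj v [:: gen (Sig t)]) /\
  va_eq m (wconj u [:: gen (Tau s); gen (Sig s)])
          (wconj v [:: gen (Tau t); gen (Sig t)]).
Proof.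
move=> h; have [hsig htau] : va_transports m (rev v ++ u) s t.
  apply: (wact_alpha_va_transports hm); rewrite wact_cat.
  exact: veq_trans (wact_veq _ _ h) (wact_revK hm _ _).
by split; apply: va_eq_wconj.
Qed.
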